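(* Let $G$ be a proper interval graph with a proper vertex ordering $<$. Let $e_1,e_2,e_3$ be distinct edges of $G$ such that $l(e_1)\leq l(e_2)\leq l(e_3)$ and $r(e_1)\leq r(e_2)\leq r(e_3)$. If $\{e_1,e_3\}$ is not a uniquely restricted matching in $G$, then neither $\{e_1,e_2\}$ nor $\{e_2,e_3\}$ is a uniquely restricted matching in $G$.
   Context: Graphs are finite, simple, undirected. A proper interval graph is a graph with an interval representation (closed real intervals, adjacency iff intersection for distinct vertices) in which no interval strictly contains another. An ordering $<$ of $V(G)$ is a proper vertex ordering if for all $u<v<w$, $uw\in E(G)$ implies $uv,vw\in E(G)$; $\leq$ denotes $<$ or equality. For an edge $e=uv$, $l(e)=\min_<\{u,v\}$ and $r(e)=\max_<\{u,v\}$. A matching is a set of pairwise vertex-disjoint edges; it is uniquely restricted if no other matching of $G$ matches exactly the same vertex set (a set of edges that is not a matching is in particular not a uniquely restricted matching). *)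

From Stdlib Require Import Rdefinitions Raxioms.
From mathcomp Require Import all_boot.
Set Implicit Arguments. Unset Strict Implicit. Unset Printing Implicit Defensive.

Definition simple_graph (T : finType) (g : rel T) : Prop :=
  symmetric g /\ irreflexive g.

(* Interval representation by closed real intervals [(I x).1, (I x).2]
   (with (I x).1 <= (I x).2), adjacency iff intersection for distinct vertices,
   and no interval strictly contains another. *)
Definition proper_interval_rep (T : finType) (g : rel T) (I : T -> R * R) : Prop :=
  (forall x, Rle (I x).1 (I x).2) /\
  (forall x y, x != y ->
     (g x y <-> (Rle (I x).1 (I y).2 /\ Rle (I y).1 (I x).2))) /\
  (forall x y, x != y ->
     ~ ((Rle (I y).1 (I x).1 /\ Rle (I x).2 (I y).2) /\ I x <> I y)).

Definition proper_interval_graph (T : finType) (g : rel T) : Prop :=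
  simple_graph g /\ exists I, proper_interval_rep g I.

(* A linear ordering of V(G) is given by an injective rank function
   ord : T -> nat, with u < v iff ord u < ord v. *)
Definition proper_vertex_ordering (T : finType) (g : rel T) (ord : T -> nat) : Prop :=
  injective ord /\
  (forall u v w, ord u < ord v -> ord v < ord w -> g u w -> g u v /\ g v w).

Definition is_edge (T : finType) (g : rel T) (E : {set T}) : Prop :=
  exists u v, g u v /\ E = [set u; v].

Definition matching (T : finType) (g : rel T) (M : {set {set T}}) : Prop :=
  (forall E, E \in M -> is_edge g E) /\
  (forall E F, E \in M -> F \in M -> E != F -> [disjoint E & F]).

Definition matched (T : finType) (M : {set {set T}}) : {set T} := cover M.

Definition uniquely_restricted (T : finType) (g : rel T) (M : {set {set T}}) : Prop :=
  matching g M /\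
  (forall M', matching g M' -> matched M' = matched M -> M' = M).

From Stdlib Require Import Rdefinitions.
From mathcomp Require Import all_boot.

(* Two disjoint edges pq, rs form a uniquely restricted matching unless
   {p, q, r, s} carries another perfect matching, i.e. unless pr, qs or
   ps, qr are edges.  For edges ordered by their left and right ends, a
   proper vertex ordering turns ps, qr into pr, qs, so only the
   "parallel" pair a1a2, b1b2 matters.  If the edges e1, e2 interleave
   (a2 < b1), both parallel edges exist by the umbrella property; otherwise
   e1 and e3 are separated, the failure of {e1, e3} gives a1a3 and b1b3,
   and these shrink to a1a2 and b1b2.  The pair {e2, e3} is symmetric. *)

Set Implicit Arguments.
Unset Strict Implicit.
Unset Printing Implicit Defensive.

Section UniquelyRestrictedPairs.

Variables (T : finType) (g : rel T).
Hypotheses (gsym : symmetric g) (girr : irreflexive g).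
Implicit Types (p q r s x y : T) (E F : {set T}) (M : {set {set T}}).

Lemma cover_set2 E F : cover [set E; F] = E :|: F.
Proof.
apply/setP => x; rewrite inE; apply/bigcupP/orP => [[D /set2P[]-> xD] | []].
- by left.
- by right.
- by exists E; rewrite ?set21.
- by exists F; rewrite ?set22.
Qed.

Lemma disjoint_set2 p q r s :
  [disjoint [set p; q] & [set r; s]] = [&& p != r, p != s, q != r & q != s].
Proof.
rewrite (@eq_disjoint _ _ (mem [:: p; q])) => [|x]; last by rewrite !inE.
by rewrite !disjoint_cons disjoint_has !inE !negb_or andbT -!andbA.
Qed.

Lemma mem_cover M E x : E \in M -> x \in E -> x \in cover M.
Proof. by move=> EM xE; apply/bigcupP; exists E. Qed.

Lemma matching_set2 p q r s : g p q -> g r s ->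
  [disjoint [set p; q] & [set r; s]] -> matching g [set [set p; q]; [set r; s]].
Proof.
move=> gpq grs disj; split=> [E /set2P[]-> | E F]; first by exists p, q.
  by exists r, s.
by move=> /set2P[]-> /set2P[]->; rewrite ?eqxx // disjoint_sym.
Qed.

Lemma matching_edge_uniq M E F x : matching g M -> E \in M -> F \in M ->
  x \in E -> x \in F -> E = F.
Proof.
move=> [_ disj] EM FM xE xF; apply/eqP; apply: contraT => neEF.
by rewrite (disjointFr (disj E F EM FM neEF) xE) in xF.
Qed.

Lemma ur_set2_disjoint E F :
  uniquely_restricted g [set E; F] -> E != F -> [disjoint E & F].
Proof. by move=> [[_ disj] _]; apply: disj; rewrite ?set21 ?set22. Qed.

Lemma matching_rel M x y : matching g M -> [set x; y] \in M -> g x y.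
Proof.
move=> [edges _] /edges [u [v [guv Exy]]]; move: guv.
have : u \in [set x; y] by rewrite Exy set21.
have : v \in [set x; y] by rewrite Exy set22.
by case/set2P=> -> /set2P[]-> //; rewrite ?girr // gsym.
Qed.

Lemma matching_mate M x : matching g M -> x \in cover M ->
  exists2 y, [set x; y] \in M & g x y.
Proof.
move=> mM /bigcupP[E EM xE]; have [u [v [guv Euv]]] := mM.1 E EM.
move: xE; rewrite Euv => /set2P[]->; first by exists v; rewrite // -Euv.
by exists u; [rewrite setUC -Euv | rewrite gsym].
Qed.

Lemma matching_complement M E x y : matching g M -> E \in M ->
  cover M \subset E :|: [set x; y] -> x \in cover M -> x \notin E ->
  [set x; y] \in M.
Proof.
move=> mM EM covM xM xE; have [z xzM gxz] := matching_mate mM xM.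
have zE : z \notin E.
  apply: contra xE => zE.
  by rewrite (matching_edge_uniq mM EM xzM zE (set22 x z)) set21.
have /(subsetP covM) := mem_cover xzM (set22 x z).
rewrite inE (negbTE zE) => /set2P[zx | <- //].
by rewrite zx girr in gxz.
Qed.

Lemma matching_eq_set2 M E F : matching g M -> E \in M -> F \in M ->
  cover M \subset E :|: F -> M = [set E; F].
Proof.
move=> mM EM FM covM; apply/setP => D; apply/idP/set2P => [DM | [] -> //].
have [u [v [_ Duv]]] := mM.1 D DM; have uD : u \in D by rewrite Duv set21.
have /(subsetP covM)/setUP[uE | uF] := mem_cover DM uD.
- by left; apply: matching_edge_uniq mM DM EM uD uE.
- by right; apply: matching_edge_uniq mM DM FM uD uF.
Qed.

Lemma swap_not_ur p q r s : g p r -> g q s -> p != q -> r != s ->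
  [disjoint [set p; q] & [set r; s]] ->
  ~ uniquely_restricted g [set [set p; q]; [set r; s]].
Proof.
move=> gpr gqs npq nrs disj [_ ur]; move: (disj).
rewrite disjoint_set2 => /and4P[_ nps nqr _].
have disj' : [disjoint [set p; r] & [set q; s]].
  by rewrite disjoint_set2 npq nps eq_sym nqr nrs.
have covE : cover [set [set p; r]; [set q; s]] = cover [set [set p; q]; [set r; s]].
  by rewrite !cover_set2 setUACA.
have /setP/(_ [set p; r]) := ur _ (matching_set2 gpr gqs disj') covE.
rewrite set21 => /esym/set2P[prE | prE].
- have rpq : r \in [set p; q] by rewrite -prE set22.
  by move: (disjointFr disj rpq); rewrite set21.
- have prs : p \in [set r; s] by rewrite -prE set21.
  by move: (disjointFl disj prs); rewrite set21.
Qed.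

Lemma matching_no_swap_eq M p q r s : matching g M ->
  cover M = [set p; q] :|: [set r; s] ->
  p != q -> [disjoint [set p; q] & [set r; s]] ->
  ~~ (g p r && g q s) -> ~~ (g p s && g q r) ->
  M = [set [set p; q]; [set r; s]].
Proof.
move=> mM covM npq disj /negP nparallel /negP ncross.
move: disj; rewrite disjoint_set2 => /and4P[npr _ nqr nqs].
have inM z : (z \in cover M) = [|| z == p, z == q, z == r | z == s].
  by rewrite covM !inE -!orbA.
have pM : p \in cover M by rewrite inM eqxx.
have qM : q \in cover M by rewrite inM eqxx !orbT.
have [x pxM gpx] := matching_mate mM pM.
have /or4P[] : [|| x == p, x == q, x == r | x == s].
  by rewrite -inM (mem_cover pxM (set22 p x)).
- by move/eqP=> xp; rewrite xp girr in gpx.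
- move/eqP=> xq; rewrite xq in pxM.
  have rsM : [set r; s] \in M.
    apply: matching_complement mM pxM _ _ _; first by rewrite covM.
      by rewrite inM eqxx !orbT.
    by rewrite !inE negb_or ![r == _]eq_sym npr nqr.
  by apply: matching_eq_set2 mM pxM rsM _; rewrite covM.
- move/eqP=> xr; rewrite xr in pxM gpx; case: nparallel; rewrite gpx /=.
  apply: matching_rel mM (matching_complement mM pxM _ qM _).
    by apply/subsetP => z; rewrite inM !inE; case/or4P=> ->; rewrite ?orbT.
  by rewrite !inE negb_or eq_sym npq nqr.
- move/eqP=> xs; rewrite xs in pxM gpx; case: ncross; rewrite gpx /=.
  apply: matching_rel mM (matching_complement mM pxM _ qM _).
    by apply/subsetP => z; rewrite inM !inE; case/or4P=> ->; rewrite ?orbT.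
  by rewrite !inE negb_or eq_sym npq nqs.
Qed.

Lemma ur_set2P p q r s : g p q -> g r s -> [disjoint [set p; q] & [set r; s]] ->
  reflect (uniquely_restricted g [set [set p; q]; [set r; s]])
          (~~ (g p r && g q s) && ~~ (g p s && g q r)).
Proof.
move=> gpq grs disj; have npq : p != q by apply: contraTneq gpq => ->; rewrite girr.
have nrs : r != s by apply: contraTneq grs => ->; rewrite girr.
apply: (iffP andP) => [[nparallel ncross] | ur].
  split=> [|M mM]; first exact: matching_set2.
  rewrite /matched cover_set2 => covM.
  exact: matching_no_swap_eq.
split; apply/negP => /andP[gp gq]; first exact: swap_not_ur gp gq npq nrs disj ur.
rewrite [[set r; s]]setUC in disj ur.
by apply: swap_not_ur gp gq npq _ disj ur; rewrite eq_sym.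
Qed.

Variable ord : T -> nat.
Hypothesis pvo : proper_vertex_ordering g ord.

Lemma ltn_ord_neq u v : ord u < ord v -> u != v.
Proof. by apply: contraTneq => ->; rewrite ltnn. Qed.

Lemma edge_shrinkr u v w : ord u < ord v -> ord v <= ord w -> g u w -> g u v.
Proof.
move=> uv; rewrite leq_eqVlt => /orP[/eqP/pvo.1-> // | vw guw].
by case: (pvo.2 u v w uv vw guw).
Qed.

Lemma edge_shrinkl u v w : ord u <= ord v -> ord v < ord w -> g u w -> g v w.
Proof.
rewrite leq_eqVlt => /orP[/eqP/pvo.1-> // | uv vw guw].
by case: (pvo.2 u v w uv vw guw).
Qed.

Lemma interleaved_edges_adj a b c d : ord a < ord c -> ord c < ord b ->
  ord b < ord d -> g a b -> g c d -> g a c && g b d.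
Proof.
move=> ac cb bd gab gcd.
by rewrite (edge_shrinkr ac (ltnW cb) gab) (edge_shrinkl (ltnW cb) bd gcd).
Qed.

Lemma ur_ordered_set2P a b c d : g a b -> g c d -> ord a < ord b ->
  ord c < ord d -> ord a < ord c -> ord b < ord d -> b != c ->
  reflect (uniquely_restricted g [set [set a; b]; [set c; d]])
          (~~ (g a c && g b d)).
Proof.
move=> gab gcd ab cd ac bd nbc.
have disj : [disjoint [set a; b] & [set c; d]].
  rewrite disjoint_set2 nbc (ltn_ord_neq ac) (ltn_ord_neq bd).
  by rewrite (ltn_ord_neq (ltn_trans ac cd)).
have cross : g a d && g b c -> g a c && g b d.
  case/andP=> gad _.
  by rewrite (edge_shrinkr ac (ltnW cd) gad) (edge_shrinkl (ltnW ab) bd gad).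
by rewrite -(andb_idr (contra cross)); apply: ur_set2P.
Qed.

Variables a1 b1 a2 b2 a3 b3 : T.
Hypothesis nur13 : ~ uniquely_restricted g [set [set a1; b1]; [set a3; b3]].
Hypotheses (g1 : g a1 b1) (g2 : g a2 b2) (g3 : g a3 b3).
Hypotheses (o1 : ord a1 < ord b1) (o2 : ord a2 < ord b2) (o3 : ord a3 < ord b3).
Hypotheses (la12 : ord a1 <= ord a2) (la23 : ord a2 <= ord a3).
Hypotheses (lb12 : ord b1 <= ord b2) (lb23 : ord b2 <= ord b3).

Lemma separated_edges_adj : ord b1 < ord a3 -> g a1 a3 && g b1 b3.
Proof.
move=> b1a3; apply: contra_notT nur13 => nparallel.
have a1a3 := ltn_trans o1 b1a3; have b1b3 := ltn_trans b1a3 o3.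
exact/(ur_ordered_set2P g1 g3 o1 o3 a1a3 b1b3 (ltn_ord_neq b1a3)).
Qed.

Lemma not_ur_left : [set a1; b1] != [set a2; b2] ->
  ~ uniquely_restricted g [set [set a1; b1]; [set a2; b2]].
Proof.
move=> n12 ur12; move: (ur_set2_disjoint ur12 n12).
rewrite disjoint_set2 => /and4P[na12 _ nb1a2 nb12].
have a1a2 : ord a1 < ord a2 by rewrite ltn_neqAle (inj_eq pvo.1) na12.
have b1b2 : ord b1 < ord b2 by rewrite ltn_neqAle (inj_eq pvo.1) nb12.
move/(ur_ordered_set2P g1 g2 o1 o2 a1a2 b1b2 nb1a2)/negP: ur12; apply.
case: (ltngtP (ord a2) (ord b1)) => [a2b1 | b1a2 | /pvo.1 a2b1].
- exact: interleaved_edges_adj a1a2 a2b1 b1b2 g1 g2.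
- have /andP[ga13 gb13] := separated_edges_adj (leq_trans b1a2 la23).
  by rewrite (edge_shrinkr a1a2 la23 ga13) (edge_shrinkr b1b2 lb23 gb13).
- by rewrite a2b1 eqxx in nb1a2.
Qed.

Lemma not_ur_right : [set a2; b2] != [set a3; b3] ->
  ~ uniquely_restricted g [set [set a2; b2]; [set a3; b3]].
Proof.
move=> n23 ur23; move: (ur_set2_disjoint ur23 n23).
rewrite disjoint_set2 => /and4P[na23 _ nb2a3 nb23].
have a2a3 : ord a2 < ord a3 by rewrite ltn_neqAle (inj_eq pvo.1) na23.
have b2b3 : ord b2 < ord b3 by rewrite ltn_neqAle (inj_eq pvo.1) nb23.
move/(ur_ordered_set2P g2 g3 o2 o3 a2a3 b2b3 nb2a3)/negP: ur23; apply.
case: (ltngtP (ord a3) (ord b2)) => [a3b2 | b2a3 | /pvo.1 a3b2].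
- exact: interleaved_edges_adj a2a3 a3b2 b2b3 g2 g3.
- have /andP[ga13 gb13] := separated_edges_adj (leq_ltn_trans lb12 b2a3).
  by rewrite (edge_shrinkl la12 a2a3 ga13) (edge_shrinkl lb12 b2b3 gb13).
- by rewrite a3b2 eqxx in nb2a3.
Qed.

End UniquelyRestrictedPairs.

Theorem lemma4 (T : finType) (g : rel T) (ord : T -> nat)
  (a1 b1 a2 b2 a3 b3 : T) :
  proper_interval_graph g ->
  proper_vertex_ordering g ord ->
  g a1 b1 -> g a2 b2 -> g a3 b3 ->
  ord a1 < ord b1 -> ord a2 < ord b2 -> ord a3 < ord b3 ->
  [set a1; b1] != [set a2; b2] ->
  [set a1; b1] != [set a3; b3] ->
  [set a2; b2] != [set a3; b3] ->
  ord a1 <= ord a2 -> ord a2 <= ord a3 ->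
  ord b1 <= ord b2 -> ord b2 <= ord b3 ->
  ~ uniquely_restricted g [set [set a1; b1]; [set a3; b3]] ->
  ~ uniquely_restricted g [set [set a1; b1]; [set a2; b2]] /\
  ~ uniquely_restricted g [set [set a2; b2]; [set a3; b3]].
Proof.
move=> [[gsym girr] _] pvo g1 g2 g3 o1 o2 o3 n12 _ n23 la12 la23 lb12 lb23 nur13.
split; first exact: (not_ur_left gsym girr pvo nur13).
exact: (not_ur_right gsym girr pvo nur13).
Qed.
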